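(* Let $\{G(n)\}$ be a sequence of random intersection graphs satisfying condition (A) and $\mathrm{Var}(Y(n))=O(1)$. Then $\omega(G(n))=\omega'(G(n))+O_P(1)$. If, in addition, there is a positive sequence $\varepsilon_n\to0$ with $n\,\mathbb P(Y(n)>\varepsilon_n n^{1/2})\to0$, then there is an absolute constant $C$ such that $\mathbb P\big(\omega(G(n))\le \max\{C,\ \omega'(G(n))+3\}\big)\to1$.
   Context: Random intersection graph: given positive integers $n,m$ and a probability measure $P$ on $\{0,1,\dots,m\}$, $G(n,m,P)$ has vertex set $V=[n]$ and attribute set $W=\{w_1,\dots,w_m\}$; independent random subsets $S_1,\dots,S_n\subseteq W$ are drawn with $\mathbb P(S_v=S)=P(|S|)/\binom{m}{|S|}$ for every $S\subseteq W$, and distinct $u,v$ are adjacent iff $S_u\cap S_v\neq\emptyset$. For a sequence $G(n)=G(n,m(n),P(n))$ with $m(n)\to\infty$, $X(n)$ has law $P(n)$ and $Y(n)=(n/m)^{1/2}X(n)$. Condition (A): $\mathbb E\,Y(n)=O(1)$. $\omega(G)$ is the clique number. For $w\in W$, $T(w)=\{v\in V: w\in S_v\}$ (a clique, called monochromatic), and $\omega'(G(n))=\max_{w\in W}|T(w)|$. *)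

From HB Require Import structures.
From Stdlib Require Import Reals.
From mathcomp Require Import all_boot.
Open Scope R_scope.

Set Implicit Arguments.
Unset Strict Implicit.
Unset Printing Implicit Defensive.

Lemma Rplus_assoc' : associative Rplus.
Proof. by move=> x y z; rewrite Rplus_assoc. Qed.
Lemma Rmult_assoc' : associative Rmult.
Proof. by move=> x y z; rewrite Rmult_assoc. Qed.
HB.instance Definition _ := Monoid.isComLaw.Build R R0 Rplus
  Rplus_assoc' Rplus_comm Rplus_0_l.
HB.instance Definition _ := Monoid.isComLaw.Build R R1 Rmult
  Rmult_assoc' Rmult_comm Rmult_1_l.

(* A configuration of G(n,m,P): vertex v in 'I_n gets attribute set S_v,
   a subset of W = 'I_m. *)
Definition config (n m : nat) := {ffun 'I_n -> {set 'I_m}}.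

(* P : nat -> R represents the law of |S_v| on {0,...,m} (values at k > m
   are irrelevant). It is a probability measure on {0..m}: *)
Definition is_prob_measure (m : nat) (P : nat -> R) : Prop :=
  (forall k, (k <= m)%N -> (0 <= P k)) /\
  \big[Rplus/R0]_(k < m.+1) P k = R1.

(* P(S_v = S) = P(|S|) / binom(m,|S|), independently over v. *)
Definition cfg_weight (n m : nat) (P : nat -> R) (S : config n m) : R :=
  \big[Rmult/R1]_(v : 'I_n) (P #|S v| / INR 'C(m, #|S v|)).

Definition prob (n m : nat) (P : nat -> R) (E : pred (config n m)) : R :=
  \big[Rplus/R0]_(S : config n m | E S) cfg_weight P S.

Definition adj (n m : nat) (S : config n m) (u v : 'I_n) : bool :=
  (u != v) && (S u :&: S v != set0).

Definition is_clique (n m : nat) (S : config n m) (K : {set 'I_n}) : bool :=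
  [forall u in K, forall v in K, (u != v) ==> adj S u v].

Definition clique_number (n m : nat) (S : config n m) : nat :=
  \max_(K : {set 'I_n} | is_clique S K) #|K|.

Definition T (n m : nat) (S : config n m) (w : 'I_m) : {set 'I_n} :=
  [set v | w \in S v].

Definition omega' (n m : nat) (S : config n m) : nat :=
  \max_(w : 'I_m) #|T S w|.

(* Y(n) = (n/m)^{1/2} X(n), where X(n) has law P(n). *)
Definition Yscale (n m : nat) : R := sqrt (INR n / INR m).

Definition EY (n m : nat) (P : nat -> R) : R :=
  (Yscale n m * \big[Rplus/R0]_(k < m.+1) (INR k * P k)).

Definition EY2 (n m : nat) (P : nat -> R) : R :=
  (Yscale n m ^ 2 * \big[Rplus/R0]_(k < m.+1) (INR k ^ 2 * P k)).

Definition VarY (n m : nat) (P : nat -> R) : R :=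
  (EY2 n m P - EY n m P ^ 2).

Definition Rltb (x y : R) : bool := if Rlt_dec x y then true else false.

Definition probY_gt (n m : nat) (P : nat -> R) (t : R) : R :=
  \big[Rplus/R0]_(k < m.+1 | Rltb t (Yscale n m * INR k)) P k.

Definition eventually_bounded (u : nat -> R) : Prop :=
  exists B N, forall n, (N <= n)%N -> (Rabs (u n) <= B).

Definition tends_to_infinity (u : nat -> nat) : Prop :=
  forall M, exists N, forall n, (N <= n)%N -> (M <= u n)%N.

Definition tends_to (u : nat -> R) (l : R) : Prop :=
  forall eps, (0 < eps) -> exists N, forall n, (N <= n)%N ->
    (Rabs (u n - l) < eps).

(* Standing assumptions on the sequence G(n) = G(n, m(n), P(n)). *)
Definition ri_sequence (m : nat -> nat) (P : nat -> nat -> R) : Prop :=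
  tends_to_infinity m /\ forall n, is_prob_measure (m n) (P n).

Definition condA (m : nat -> nat) (P : nat -> nat -> R) : Prop :=
  eventually_bounded (fun n => EY n (m n) (P n)).

From HB Require Import structures.
From Stdlib Require Import Reals Lra Lia Psatz.
From mathcomp Require Import all_boot zify.
Set Implicit Arguments.
Unset Strict Implicit.
Unset Printing Implicit Defensive.

(* Both parts rest on a deterministic statement followed by a first-moment
   (union bound) estimate.
   - Part 1.  Call a vertex bad if it shares two attributes with another vertex,
     or lies on a triangle whose edges come from three distinct attributes.  A
     clique without bad vertices is contained in some T(w), so
     omega <= omega' + #bad + 1.  By independence of the vertices and the
     superset bound P(F \subset S_v) <= E[(X/m)^|F|], the expected number of bad
     vertices is at most A^2 + A^3 with A = n m E[(X/m)^2] = E[Y^2], which is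
     bounded under (A) and Var Y = O(1); Markov's inequality concludes.
   - Part 2.  A clique of size at least 4 that is not monochromatic contains an
     "external triple" or a "rainbow K4".  When every |S_v| is at most
     eps m^(1/2) (which fails with probability at most n P(Y > eps n^(1/2))),
     these patterns have probability O((eps + eps^4) A^4), giving
     omega <= max(3, omega') with probability tending to 1.
   The file develops the combinatorics, then the probabilistic model, the two
   estimates, and finally the asymptotic statements. *)

Section Picking.
Variable T : finType.
Implicit Types A : {set T}.

Lemma pick_two A : (2 <= #|A|)%N ->
  exists a b, [/\ a \in A, b \in A & a != b].
Proof.
move=> hA; have [a aA] : exists a, a \in A by apply/card_gt0P; lia.
have [b] : exists b, b \in A :\ a by apply/card_gt0P; move: hA; rewrite (cardsD1 a) aA; lia.
by rewrite !inE => /andP[ba bA]; exists a, b; rewrite eq_sym.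
Qed.

Lemma pick_three A : (3 <= #|A|)%N ->
  exists a b c, [/\ [/\ a \in A, b \in A & c \in A] & [/\ a != b, a != c & b != c]].
Proof.
move=> hA; have [a aA] : exists a, a \in A by apply/card_gt0P; lia.
have [b [c [/setD1P[ba bA] /setD1P[ca cA] bc]]] :
    exists b c, [/\ b \in A :\ a, c \in A :\ a & b != c].
  by apply: pick_two; move: hA; rewrite (cardsD1 a) aA; lia.
by exists a, b, c; rewrite ![a == _]eq_sym.
Qed.

Lemma pick_four A : (4 <= #|A|)%N ->
  exists a b c d, [/\ [/\ a \in A, b \in A, c \in A & d \in A] &
     [/\ a != b, a != c, a != d & [/\ b != c, b != d & c != d]]].
Proof.
move=> hA; have [a aA] : exists a, a \in A by apply/card_gt0P; lia.
have [b [c [d [[/setD1P[ba bA] /setD1P[ca cA] /setD1P[da dA]] [bc bd cd]]]]] :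
    exists b c d, [/\ [/\ b \in A :\ a, c \in A :\ a & d \in A :\ a] &
                      [/\ b != c, b != d & c != d]].
  by apply: pick_three; move: hA; rewrite (cardsD1 a) aA; lia.
by exists a, b, c, d; rewrite ![a == _]eq_sym.
Qed.

Lemma three_distinct_card A a b c :
  a \in A -> b \in A -> c \in A -> a != b -> a != c -> b != c -> (3 <= #|A|)%N.
Proof.
move=> aA bA cA ab ac bc.
have <- : #|[set a; b; c]| = 3%N.
  by rewrite setUC cardsU1 cards2 ab !inE negb_or ![c == _]eq_sym ac bc.
apply: subset_leq_card; apply/subsetP => x; rewrite !inE.
by case/orP => [/orP[]|] /eqP ->.
Qed.

End Picking.

Section Cliques.
Variables n m : nat.
Implicit Types (S : config n m) (K : {set 'I_n}).

Lemma clique_card_le S K : is_clique S K -> (#|K| <= clique_number S)%N.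
Proof. exact: (@leq_bigmax_cond _ (is_clique S) (fun K => #|K|) K). Qed.

Lemma clique_number_leP S b :
  (forall K, is_clique S K -> (#|K| <= b)%N) -> (clique_number S <= b)%N.
Proof. by move=> hb; apply/bigmax_leqP. Qed.

Lemma clique_share S K u v : is_clique S K -> u \in K -> v \in K -> u != v ->
  exists2 w, w \in S u & w \in S v.
Proof.
move=> /forall_inP /(_ u) hK uK vK uv.
move: (hK uK) => /forall_inP /(_ v vK) /implyP /(_ uv).
by rewrite /adj uv => /set0Pn[w]; rewrite inE => /andP[]; exists w.
Qed.

Lemma clique_subset S K K' : is_clique S K -> K' \subset K -> is_clique S K'.
Proof.
move=> /forall_inP hK /subsetP sK; apply/forall_inP => u uK.
by move: (hK u (sK u uK)) => /forall_inP hu; apply/forall_inP => v vK; apply: hu; apply: sK.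
Qed.

Lemma T_clique S w : is_clique S (T S w).
Proof.
apply/forall_inP => u; rewrite inE => wu; apply/forall_inP => v; rewrite inE => wv.
by apply/implyP => uv; rewrite /adj uv; apply/set0Pn; exists w; rewrite inE wu wv.
Qed.

Lemma T_card_le S w : (#|T S w| <= omega' S)%N.
Proof. exact: (@leq_bigmax _ (fun w => #|T S w|) w). Qed.

Lemma omega'_le_clique_number S : (omega' S <= clique_number S)%N.
Proof. by apply/bigmax_leqP => w _; apply/clique_card_le/T_clique. Qed.

End Cliques.

Section BadVertices.
Variables n m : nat.
Implicit Types (S : config n m) (K : {set 'I_n}).

Definition doubly_linked S v : bool :=
  [exists u, (u != v) && [exists w1, [exists w2,
     [&& w1 != w2, w1 \in S u, w2 \in S u, w1 \in S v & w2 \in S v]]]].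

Definition rainbow_triangle S v : bool :=
  [exists u, [exists z, [&& u != v, z != v, u != z &
     [exists w1, [exists w2, [exists w3,
       [&& w1 != w2, w2 != w3, w1 != w3, w1 \in S v, w1 \in S u, w2 \in S u,
           w2 \in S z, w3 \in S z & w3 \in S v]]]]]]].

Definition bad_vertices S : {set 'I_n} :=
  [set v | doubly_linked S v || rainbow_triangle S v].

Lemma clique_monochromatic S K : is_clique S K -> [disjoint K & bad_vertices S] ->
  (2 <= #|K|)%N -> exists w, K \subset T S w.
Proof.
move=> hK hdis /pick_two[u [v [uK vK uv]]].
have /andP[ndl_v nrt_v] : ~~ doubly_linked S v && ~~ rainbow_triangle S v.
  by move/negbT: (disjointFr hdis vK); rewrite inE negb_or.
have [w wu wv] := clique_share hK uK vK uv.
exists w; apply/subsetP => z zK; rewrite inE.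
have [->|zu] := eqVneq z u; first by [].
have [->|zv] := eqVneq z v; first by [].
apply: contraNT nrt_v => wz.
have [w2 w2u w2z] := clique_share hK uK zK (ltac:(by rewrite eq_sym)).
have [w3 w3z w3v] := clique_share hK zK vK zv.
have neq_w x : x \in S z -> w != x by move=> xz; apply: contraNneq wz => ->.
have [e23|n23] := eqVneq w2 w3.
  (* w2 = w3 would be a second attribute shared by u and v *)
  case/negP: ndl_v; apply/existsP; exists u; rewrite uv; apply/existsP; exists w.
  by apply/existsP; exists w2; rewrite neq_w // wu w2u wv e23 w3v.
apply/existsP; exists u; apply/existsP; exists z; rewrite uv zv (eq_sym u) zu /=.
apply/existsP; exists w; apply/existsP; exists w2; apply/existsP; exists w3.
by rewrite !neq_w // n23 wv wu w2u w2z w3z w3v.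
Qed.

(* Removing the bad vertices from a clique leaves a monochromatic clique. *)
Lemma clique_number_le_bad S :
  (clique_number S <= omega' S + #|bad_vertices S| + 1)%N.
Proof.
apply: clique_number_leP => K hK.
set K' := K :\: bad_vertices S.
have hcard : (#|K| <= #|K'| + #|bad_vertices S|)%N.
  rewrite -(cardsID (bad_vertices S) K) addnC leq_add2l.
  exact/subset_leq_card/subsetIr.
have [small|big] := ltnP #|K'| 2; first by lia.
have hK' : is_clique S K' by apply: clique_subset hK (subsetDl _ _).
have hdis : [disjoint K' & bad_vertices S] by rewrite disjoints_subset subsetDr.
have [w /subset_leq_card] := clique_monochromatic hK' hdis big.
by have := T_card_le S w; lia.
Qed.

End BadVertices.

Section RigidPatterns.
Variables n m : nat.
Implicit Types (S : config n m) (K : {set 'I_n}).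

Definition external_triple S : bool :=
  [exists w, [exists z, [exists a1, [exists a2, [exists a3,
  [exists u1, [exists u2, [exists u3,
    [&& [&& a1 != a2, a1 != a3, a2 != a3, z != a1, z != a2 & z != a3],
        [&& u1 != w, u2 != w & u3 != w],
        [&& w \in S a1, w \in S a2 & w \in S a3],
        [&& u1 \in S a1, u2 \in S a2 & u3 \in S a3] &
        [&& u1 \in S z, u2 \in S z & u3 \in S z]]]]]]]]]].

Definition rainbow_K4 S : bool :=
  [exists v1, [exists v2, [exists v3, [exists v4,
  [exists w12, [exists w13, [exists w14, [exists w23, [exists w24, [exists w34,
    [&& [&& v1 != v2, v1 != v3, v1 != v4, v2 != v3, v2 != v4 & v3 != v4],
        [&& w12 != w13, w12 != w14 & w13 != w14],
        [&& w12 != w23, w12 != w24 & w23 != w24],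
        [&& w13 != w23, w13 != w34 & w23 != w34],
        [&& w14 != w24, w14 != w34 & w24 != w34],
        [&& w12 \in S v1, w13 \in S v1 & w14 \in S v1],
        [&& w12 \in S v2, w23 \in S v2 & w24 \in S v2],
        [&& w13 \in S v3, w23 \in S v3 & w34 \in S v3] &
        [&& w14 \in S v4, w24 \in S v4 & w34 \in S v4]]]]]]]]]]]].

(* Introduction rule for external triples (z != ai and ui != w follow from
   w \notin S z). *)
Lemma external_tripleI S w z a1 a2 a3 u1 u2 u3 :
  a1 != a2 -> a1 != a3 -> a2 != a3 ->
  w \in S a1 -> w \in S a2 -> w \in S a3 -> w \notin S z ->
  u1 \in S a1 -> u2 \in S a2 -> u3 \in S a3 ->
  u1 \in S z -> u2 \in S z -> u3 \in S z -> external_triple S.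
Proof.
move=> d12 d13 d23 wa1 wa2 wa3 wz u1a u2a u3a u1z u2z u3z.
have za a : w \in S a -> z != a by move=> wa; apply: contraNneq wz => ->.
have uw u : u \in S z -> u != w by move=> uz; apply: contraNneq wz => <-.
apply/existsP; exists w; apply/existsP; exists z.
apply/existsP; exists a1; apply/existsP; exists a2; apply/existsP; exists a3.
apply/existsP; exists u1; apply/existsP; exists u2; apply/existsP; exists u3.
rewrite d12 d13 d23 (za _ wa1) (za _ wa2) (za _ wa3) (uw _ u1z) (uw _ u2z) (uw _ u3z).
by rewrite wa1 wa2 wa3 u1a u2a u3a u1z u2z u3z.
Qed.

Lemma clique_heavy_colour S K w : is_clique S K -> ~~ external_triple S ->
  (3 <= #|K :&: T S w|)%N -> K \subset T S w.
Proof.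
move=> hK no_ext /pick_three[a1 [a2 [a3 [[] + + + [d12 d13 d23]]]]].
rewrite !inE => /andP[a1K wa1] /andP[a2K wa2] /andP[a3K wa3].
apply/subsetP => z zK; rewrite inE; apply: contraNT no_ext => wz.
have za a : w \in S a -> z != a by move=> wa; apply: contraNneq wz => ->.
have [u1 u1z u1a] := clique_share hK zK a1K (za _ wa1).
have [u2 u2z u2a] := clique_share hK zK a2K (za _ wa2).
have [u3 u3z u3a] := clique_share hK zK a3K (za _ wa3).
exact: (external_tripleI d12 d13 d23 wa1 wa2 wa3 wz u1a u2a u3a u1z u2z u3z).
Qed.

Lemma clique_light_colours S K : is_clique S K -> (4 <= #|K|)%N ->
  (forall w, (#|K :&: T S w| <= 2)%N) -> rainbow_K4 S.
Proof.
move=> hK /pick_four[v1 [v2 [v3 [v4 [[k1 k2 k3 k4] [d12 d13 d14 [d23 d24 d34]]]]]]] light.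
have [w12 a12 b12] := clique_share hK k1 k2 d12.
have [w13 a13 b13] := clique_share hK k1 k3 d13.
have [w14 a14 b14] := clique_share hK k1 k4 d14.
have [w23 a23 b23] := clique_share hK k2 k3 d23.
have [w24 a24 b24] := clique_share hK k2 k4 d24.
have [w34 a34 b34] := clique_share hK k3 k4 d34.
(* two attributes seen at the same vertex differ, or a colour hits three vertices *)
have dist a b c x y : a \in K -> b \in K -> c \in K -> a != b -> a != c -> b != c ->
    x \in S a -> x \in S b -> y \in S a -> y \in S c -> x != y.
  move=> aK bK cK ab ac bc xa xb ya yc; apply/eqP => exy; subst y.
  have := three_distinct_card (A := K :&: T S x) (a := a) (b := b) (c := c).
  rewrite !inE aK bK cK xa xb yc => /(_ isT isT isT ab ac bc).
  by rewrite ltnNge light.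
have e21 : v2 != v1 by rewrite eq_sym.
have e31 : v3 != v1 by rewrite eq_sym.
have e41 : v4 != v1 by rewrite eq_sym.
have e32 : v3 != v2 by rewrite eq_sym.
have e42 : v4 != v2 by rewrite eq_sym.
have e43 : v4 != v3 by rewrite eq_sym.
apply/existsP; exists v1; apply/existsP; exists v2; apply/existsP; exists v3.
apply/existsP; exists v4; apply/existsP; exists w12; apply/existsP; exists w13.
apply/existsP; exists w14; apply/existsP; exists w23; apply/existsP; exists w24.
apply/existsP; exists w34.
rewrite d12 d13 d14 d23 d24 d34 a12 b12 a13 b13 a14 b14 a23 b23 a24 b24 a34 b34 /=.
have at1 : [&& w12 != w13, w12 != w14 & w13 != w14].
  by rewrite (dist v1 v2 v3 w12 w13) ?(dist v1 v2 v4 w12 w14) ?(dist v1 v3 v4 w13 w14).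
have at2 : [&& w12 != w23, w12 != w24 & w23 != w24].
  by rewrite (dist v2 v1 v3 w12 w23) ?(dist v2 v1 v4 w12 w24) ?(dist v2 v3 v4 w23 w24).
have at3 : [&& w13 != w23, w13 != w34 & w23 != w34].
  by rewrite (dist v3 v1 v2 w13 w23) ?(dist v3 v1 v4 w13 w34) ?(dist v3 v2 v4 w23 w34).
have at4 : [&& w14 != w24, w14 != w34 & w24 != w34].
  by rewrite (dist v4 v1 v2 w14 w24) ?(dist v4 v1 v3 w14 w34) ?(dist v4 v2 v3 w24 w34).
by rewrite at1 at2 at3 at4.
Qed.

Lemma clique_number_le_rigid S : ~~ external_triple S -> ~~ rainbow_K4 S ->
  (clique_number S <= maxn 3 (omega' S))%N.
Proof.
move=> no_ext no_K4; apply: clique_number_leP => K hK.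
rewrite leq_max; have [//|big] := leqP #|K| 3; apply/orP; right.
case: (pickP (fun w => 3 <= #|K :&: T S w|)%N) => [w heavy|light].
  have /subset_leq_card := clique_heavy_colour hK no_ext heavy.
  by move/leq_trans; apply; apply: T_card_le.
case/negP: no_K4; apply: clique_light_colours hK big _ => w.
by have := light w; rewrite /= ltnNge => /negbFE.
Qed.

End RigidPatterns.

Open Scope R_scope.

HB.instance Definition _ := Monoid.isMulLaw.Build R R0 Rmult Rmult_0_l Rmult_0_r.
HB.instance Definition _ :=
  Monoid.isAddLaw.Build R Rmult Rplus Rmult_plus_distr_r Rmult_plus_distr_l.

Lemma INR_expn a k : INR (a ^ k)%N = INR a ^ k.
Proof. by elim: k => [|k IH]; rewrite ?expn0 // expnS mult_INR IH. Qed.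

Section RealBigops.
Variable I : finType.
Implicit Types (p q : pred I) (F G : I -> R).

Lemma sumR_le p F G : (forall i, p i -> F i <= G i) ->
  \big[Rplus/R0]_(i | p i) F i <= \big[Rplus/R0]_(i | p i) G i.
Proof. by move=> hFG; apply: (big_ind2 Rle) => //; [lra | move=> *; lra]. Qed.

Lemma sumR_ge0 p F : (forall i, p i -> 0 <= F i) -> 0 <= \big[Rplus/R0]_(i | p i) F i.
Proof. by move=> hF; apply: (big_ind (Rle 0)) => //; [lra | move=> *; lra]. Qed.

Lemma sumR_le_sub p q F : (forall i, 0 <= F i) -> (forall i, p i -> q i) ->
  \big[Rplus/R0]_(i | p i) F i <= \big[Rplus/R0]_(i | q i) F i.
Proof.
move=> hF hpq; rewrite (big_mkcond p) (big_mkcond q); apply: sumR_le => i _.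
by case: (boolP (p i)) => [/hpq -> | _]; [lra | case: (q i) => //; lra].
Qed.

Lemma sumR_const p c : \big[Rplus/R0]_(i | p i) c = INR #|p| * c.
Proof.
rewrite (eq_bigl (mem p)) // big_const.
elim: #|_| => [|k IH]; first by rewrite /=; lra.
by rewrite iterS IH S_INR; lra.
Qed.

Lemma prodR_ge0 p F : (forall i, p i -> 0 <= F i) -> 0 <= \big[Rmult/R1]_(i | p i) F i.
Proof. by move=> hF; apply: (big_ind (Rle 0)) => //; [lra | move=> *; nra]. Qed.

End RealBigops.

Lemma sumR_le_ord k (F : 'I_k -> R) c : (forall i, F i <= c) ->
  \big[Rplus/R0]_(i < k) F i <= INR k * c.
Proof.
move=> hFc; apply: Rle_trans (sumR_le (fun i _ => hFc i)) _.
by rewrite sumR_const card_ord; right.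
Qed.

Section Model.
Variables (n m : nat) (P : nat -> R).
Hypothesis HP : is_prob_measure m P.
Implicit Types (E : pred (config n m)) (q : pred {set 'I_m}).

Definition nu (T : {set 'I_m}) : R := P #|T| / INR 'C(m, #|T|).

Definition marg q : R := \big[Rplus/R0]_(T | q T) nu T.

Lemma card_set_le (T : {set 'I_m}) : (#|T| <= m)%N.
Proof. by rewrite -[X in (_ <= X)%N](card_ord m) max_card. Qed.

Lemma binR_gt0 k : (k <= m)%N -> 0 < INR 'C(m, k).
Proof. by move=> hk; apply/lt_0_INR/ltP; rewrite bin_gt0. Qed.

Lemma P_ge0 (k : 'I_m.+1) : 0 <= P k.
Proof. exact: (proj1 HP _ (ltn_ord k)). Qed.

Lemma nu_ge0 T : 0 <= nu T.
Proof.
have hk := card_set_le T.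
apply: Rmult_le_pos; first exact: (proj1 HP).
exact/Rlt_le/Rinv_0_lt_compat/binR_gt0.
Qed.

Lemma marg_ge0 q : 0 <= marg q.
Proof. by apply: sumR_ge0 => T _; apply: nu_ge0. Qed.

Lemma marg_le q q' : (forall T, q T -> q' T) -> marg q <= marg q'.
Proof. by apply: sumR_le_sub; apply: nu_ge0. Qed.

(* Sorting attribute sets by size: the 'C(m, k) sets of size k share mass P k. *)
Lemma sum_by_size (f : nat -> R) :
  \big[Rplus/R0]_(T : {set 'I_m}) (nu T * f #|T|) =
  \big[Rplus/R0]_(k < m.+1) (P k * f k).
Proof.
pose size_of (T : {set 'I_m}) : 'I_m.+1 := Ordinal (card_set_le T : (#|T| < m.+1)%N).
rewrite (partition_big size_of predT) //; apply: eq_bigr => k _.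
rewrite (eq_bigr (fun _ => P k / INR 'C(m, k) * f k)); last first.
  by move=> T /eqP <-.
rewrite sumR_const.
have -> : #|(fun T : {set 'I_m} => true && (size_of T == k))| = 'C(m, k).
  have := card_draws 'I_m k; rewrite card_ord => <-.
  by apply: eq_card => T; rewrite !inE -topredE /= -val_eqE.
have := binR_gt0 (ltn_ord k : (k <= m)%N) => hC; field; lra.
Qed.

Lemma marg_size (r : pred nat) :
  marg (fun T => r #|T|) = \big[Rplus/R0]_(k < m.+1 | r k) P k.
Proof.
rewrite /marg big_mkcond [RHS]big_mkcond.
rewrite (eq_bigr (fun T => nu T * (if r #|T| then 1 else 0))); last first.
  by move=> T _; case: (r _); lra.
by rewrite (sum_by_size (fun k => if r k then 1 else 0)); apply: eq_bigr => k _; case: (r k); lra.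
Qed.

Lemma marg_total : marg predT = 1.
Proof. exact: (etrans (marg_size predT) (proj2 HP)). Qed.

Lemma weight_ge0 (S : config n m) : 0 <= cfg_weight P S.
Proof. by apply: prodR_ge0 => v _; apply: nu_ge0. Qed.

Lemma prob_ge0 E : 0 <= prob P E.
Proof. by apply: sumR_ge0 => S _; apply: weight_ge0. Qed.

Lemma prob_le E E' : (forall S, E S -> E' S) -> prob P E <= prob P E'.
Proof. by apply: sumR_le_sub; apply: weight_ge0. Qed.

Lemma prob_or E E1 E2 :
  (forall S, E S -> E1 S || E2 S) -> prob P E <= prob P E1 + prob P E2.
Proof.
move=> hE; rewrite /prob (big_mkcond E) (big_mkcond E1) (big_mkcond E2) -big_split.
apply: sumR_le => S _; have := weight_ge0 S; have := hE S.
by case: (E S); case: (E1 S); case: (E2 S) => //= h; try lra; have := h isT.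
Qed.

Lemma prob_exists (I : finType) (Ei : I -> pred (config n m)) :
  prob P (fun S => [exists i, Ei i S]) <= \big[Rplus/R0]_(i : I) prob P (Ei i).
Proof.
rewrite /prob; under eq_bigr => i _ do rewrite big_mkcond.
rewrite exchange_big (big_mkcond (fun S => [exists i, Ei i S])) /=.
apply: sumR_le => S _; have w0 := weight_ge0 S.
have terms_ge0 (p : pred I) :
    0 <= \big[Rplus/R0]_(i | p i) (if Ei i S then cfg_weight P S else R0).
  by apply: sumR_ge0 => i _; case: (Ei i S); lra.
case: (boolP [exists i, Ei i S]) => [/existsP[i Ei_S]|_]; last exact: terms_ge0.
have rest := terms_ge0 (fun j => j != i).
by rewrite (bigD1 i) //= Ei_S; lra.
Qed.

Lemma prob_exists_le k (Ei : 'I_k -> pred (config n m)) c :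
  (forall i, prob P (Ei i) <= c) -> prob P (fun S => [exists i, Ei i S]) <= INR k * c.
Proof. by move=> hc; apply: Rle_trans (prob_exists Ei) (sumR_le_ord hc). Qed.

Lemma prob_guard (b : bool) E B :
  0 <= B -> (b -> prob P E <= B) -> prob P (fun S => b && E S) <= B.
Proof. by case: b => B0 hb; [exact: hb | rewrite /prob big_pred0]. Qed.

Lemma prob_forall (g : 'I_n -> pred {set 'I_m}) :
  prob P (fun S => [forall v, g v (S v)]) = \big[Rmult/R1]_(v : 'I_n) marg (g v).
Proof.
rewrite /prob /cfg_weight /marg big_mkcond.
transitivity (\big[Rplus/R0]_(S : config n m)
   \big[Rmult/R1]_(v : 'I_n) (if g v (S v) then nu (S v) else 0)).
  apply: eq_bigr => S _; case: (boolP [forall v, g v (S v)]) => [/forallP gS|].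
    by apply: eq_bigr => v _; rewrite gS.
  by case/forallPn => v gSv; rewrite (bigD1 v) //= (negbTE gSv) Rmult_0_l.
rewrite -(bigA_distr_bigA (fun v T => if g v T then nu T else 0)) /=.
by apply: eq_bigr => v _; rewrite [RHS]big_mkcond.
Qed.

Lemma prob_total : prob P (fun _ : config n m => true) = 1.
Proof.
transitivity (\big[Rmult/R1]_(v : 'I_n) marg predT); last first.
  by apply: big1 => v _; apply: marg_total.
by rewrite -prob_forall; apply: eq_bigl => S; symmetry; apply/forallP.
Qed.

Lemma prob_compl E : prob P E + prob P (fun S => ~~ E S) = 1.
Proof. by rewrite -prob_total /prob [RHS](bigID E). Qed.

Lemma prob_independent (s : seq 'I_n) (pat : 'I_n -> pred {set 'I_m}) : uniq s ->
  prob P (fun S => all (fun x => pat x (S x)) s) = \big[Rmult/R1]_(x <- s) marg (pat x).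
Proof.
move=> us; pose g x T := (x \in s) ==> pat x T.
have -> : prob P (fun S => all (fun x => pat x (S x)) s) =
          prob P (fun S => [forall x, g x (S x)]).
  apply: eq_bigl => S /=; apply/allP/forallP => [sS x | sS x xs].
    by apply/implyP; apply: sS.
  by have /implyP := sS x; apply.
rewrite (prob_forall g) (bigID (mem s)) /= -(big_uniq _ us) [X in _ * X]big1.
  rewrite Rmult_1_r; apply: eq_big_seq => x xs.
  by apply: eq_bigl => T; rewrite /g /= xs.
by move=> x /negbTE xs; apply: etrans marg_total; apply: eq_bigl => T; rewrite /g xs.
Qed.

Lemma prob_four_le (x1 x2 x3 x4 : 'I_n) (q1 q2 q3 q4 : pred {set 'I_m}) E :
  uniq [:: x1; x2; x3; x4] ->
  (forall S, E S -> [&& q1 (S x1), q2 (S x2), q3 (S x3) & q4 (S x4)]) ->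
  prob P E <= marg q1 * (marg q2 * (marg q3 * marg q4)).
Proof.
move=> us hE.
pose pat x := if x == x1 then q1 else if x == x2 then q2 else if x == x3 then q3 else q4.
have [p1 [p2 [p3 p4]]] : [/\ pat x1 = q1, pat x2 = q2, pat x3 = q3 & pat x4 = q4].
  move: us; rewrite /= !inE !negb_or -!andbA /pat.
  case/and5P=> d12 d13 d14 d23 /andP[d24 /andP[d34 _]].
  rewrite eqxx ![x2 == _]eq_sym ![x3 == _]eq_sym ![x4 == _]eq_sym.
  by rewrite (negbTE d12) (negbTE d13) (negbTE d14) (negbTE d23) (negbTE d24) (negbTE d34) !eqxx.
apply: Rle_trans (prob_le (E' := fun S => all (fun x => pat x (S x)) [:: x1; x2; x3; x4]) _) _.
  by move=> S /hE /and4P[h1 h2 h3 h4]; rewrite /= p1 p2 p3 p4 h1 h2 h3 h4.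
by rewrite prob_independent // !big_cons big_nil Rmult_1_r p1 p2 p3 p4; right.
Qed.

Lemma prob_card_ge (X : config n m -> {set 'I_n}) K :
  INR K * prob P (fun S => (K <= #|X S|)%N) <=
  \big[Rplus/R0]_(v < n) prob P (fun S => v \in X S).
Proof.
have -> : \big[Rplus/R0]_(v < n) prob P (fun S => v \in X S) =
          \big[Rplus/R0]_(S : config n m) (INR #|X S| * cfg_weight P S).
  rewrite /prob; under eq_bigr => v _ do rewrite big_mkcond.
  rewrite exchange_big /=; apply: eq_bigr => S _.
  by rewrite -big_mkcond sumR_const.
rewrite /prob big_distrr /=; apply: Rle_trans (sumR_le_sub _ (fun _ _ => isT)).
  apply: sumR_le => S hS; apply: Rmult_le_compat_r; first exact: weight_ge0.
  exact/le_INR/leP.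
by move=> S; apply: Rmult_le_pos; [apply: pos_INR | apply: weight_ge0].
Qed.

End Model.

(* C(a, b) (a + f)^f <= C(a + f, b + f) (b + f)^f for b <= a: adding f
   prescribed elements to b-subsets of an a-set loses at most the factor
   ((b + f) / (a + f))^f. *)
Lemma binomial_shift_le f a b : (b <= a)%N ->
  ('C(a, b) * (a + f) ^ f <= 'C(a + f, b + f) * (b + f) ^ f)%N.
Proof.
elim: f a b => [|f IH] a b hba; first by rewrite !addn0 !expn0 !muln1.
have IH' := IH a.+1 b.+1 hba.
rewrite -(leq_pmul2l (ltn0Sn a)) !addnS -!addSn !expnS.
have e : (a.+1 * 'C(a, b) = b.+1 * 'C(a.+1, b.+1))%N by rewrite -mul_bin_diag.
move: IH' e; set X := 'C(a.+1, b.+1); set Y := 'C(a.+1 + f, b.+1 + f);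
  set u := ((a.+1 + f) ^ f)%N; set v := ((b.+1 + f) ^ f)%N => IH' e.
have h1 : (b.+1 * (a.+1 + f) <= a.+1 * (b.+1 + f))%N by nia.
have -> : (a.+1 * ('C(a, b) * ((a.+1 + f) * u)) = (b.+1 * (a.+1 + f)) * (X * u))%N.
  by rewrite mulnA e; nia.
have -> : (a.+1 * (Y * ((b.+1 + f) * v)) = (a.+1 * (b.+1 + f)) * (Y * v))%N by nia.
exact: leq_mul.
Qed.

(* Marginal bounds: P(F \subset S_v) <= E[(|S_v|/m)^|F|], since a uniform
   k-subset contains F with probability at most (k/m)^|F|. *)
Section Supersets.
Variables (m : nat) (P : nat -> R).
Hypothesis HP : is_prob_measure m P.
Hypothesis m_gt0 : (0 < m)%N.

Definition moment (j : nat) (r : pred nat) : R :=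
  \big[Rplus/R0]_(k < m.+1) (P k * (if r k then (INR k / INR m) ^ j else 0)).

Lemma moment_ge0 j r : 0 <= moment j r.
Proof.
have mR : 0 < INR m by apply/lt_0_INR/ltP.
apply: sumR_ge0 => k _; apply: Rmult_le_pos; first exact: P_ge0.
case: (r k); last lra.
by apply/pow_le/Rmult_le_pos; [apply: pos_INR | apply/Rlt_le/Rinv_0_lt_compat].
Qed.

Lemma moment_succ_le j (r : pred nat) b : 0 <= b -> (forall k, r k -> INR k <= b) ->
  moment j.+1 r <= b / INR m * moment j predT.
Proof.
move=> b0 rb; have im : 0 <= / INR m by apply/Rlt_le/Rinv_0_lt_compat/lt_0_INR/ltP.
rewrite /moment big_distrr /=; apply: sumR_le => k _.
have Pk := P_ge0 HP k.
have xj : 0 <= (INR k / INR m) ^ j by apply/pow_le/Rmult_le_pos/im/pos_INR.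
case rk: (r k); last by rewrite Rmult_0_r; apply/Rmult_le_pos/Rmult_le_pos/xj/Pk/Rmult_le_pos.
have kb : INR k / INR m <= b / INR m by apply/Rmult_le_compat_r/rb.
have -> : P k * (INR k / INR m * (INR k / INR m) ^ j) =
          INR k / INR m * (P k * (INR k / INR m) ^ j) by ring.
exact/Rmult_le_compat_r/kb/Rmult_le_pos.
Qed.

Lemma count_supersets (F : {set 'I_m}) k :
  (#|[set T : {set 'I_m} | F \subset T & #|T| == k]| * m ^ #|F|
     <= 'C(m, k) * k ^ #|F|)%N.
Proof.
set D := [set T : {set 'I_m} | F \subset T & #|T| == k].
have [km|mk] := leqP k m; last first.
  rewrite (_ : #|D| = 0)%N //; apply: eq_card0 => T; rewrite !inE.
  by apply/negP => /andP[_ /eqP e]; have := card_set_le T; lia.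
have [Fk|kF] := leqP #|F| k; last first.
  rewrite (_ : #|D| = 0)%N //; apply: eq_card0 => T; rewrite !inE.
  by apply/negP => /andP[/subset_leq_card h /eqP e]; lia.
have hD : (#|D| <= 'C(m - #|F|, k - #|F|))%N.
  have inj : {in D &, injective (fun T => T :\: F)}.
    move=> T1 T2; rewrite !inE => /andP[h1 _] /andP[h2 _] /setP e.
    apply/setP => x; have := e x; rewrite !inE.
    by case xF: (x \in F) => //=; rewrite (subsetP h1 _ xF) (subsetP h2 _ xF).
  rewrite -(card_in_imset inj).
  have -> : (m - #|F| = #|~: F|)%N by have := cardsC F; rewrite card_ord; lia.
  rewrite -cards_draws; apply: subset_leq_card; apply/subsetP => A /imsetP[T].
  rewrite !inE => /andP[hT /eqP hk] ->.
  by rewrite subsetDr /= cardsD (setIidPr hT) hk.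
have hb := binomial_shift_le #|F| (leq_sub2r #|F| km).
have Fm : (#|F| <= m)%N by apply: leq_trans km.
rewrite !subnK // in hb; apply: leq_trans hb; exact: leq_mul.
Qed.

Lemma superset_marginal (F : {set 'I_m}) (r : pred nat) :
  marg P (fun T => (F \subset T) && r #|T|) <= moment #|F| r.
Proof.
pose size_of (T : {set 'I_m}) : 'I_m.+1 := Ordinal (card_set_le T : (#|T| < m.+1)%N).
rewrite /marg (partition_big size_of predT) //; apply: sumR_le => k _.
rewrite (eq_bigr (fun _ => P k / INR 'C(m, k))); last by move=> T /andP[_ /eqP <-].
rewrite sumR_const; set D := (X in #|X|).
have mR : 0 < INR m by apply/lt_0_INR/ltP.
have CR := binR_gt0 (ltn_ord k : (k <= m)%N).
have Pk := P_ge0 HP k.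
case rk: (r k); last first.
  rewrite (_ : #|D| = 0)%N; first by rewrite /= Rmult_0_l Rmult_0_r; lra.
  apply: eq_card0 => T; rewrite /D -topredE /= -val_eqE /=.
  by case: eqP => [->|]; rewrite ?rk ?andbF.
have cardD : (#|D| * m ^ #|F| <= 'C(m, k) * k ^ #|F|)%N.
  apply: leq_trans (count_supersets F k); rewrite leq_mul2r; apply/orP; right.
  apply/subset_leq_card/subsetP => T.
  by rewrite !inE /D -topredE /= -val_eqE => /andP[/andP[-> _] ->].
have cardR : INR #|D| * INR m ^ #|F| <= INR 'C(m, k) * INR k ^ #|F|.
  by rewrite -!INR_expn -!mult_INR; apply/le_INR/leP.
have mF : 0 < INR m ^ #|F| by apply: pow_lt.
have -> : P k * (INR k / INR m) ^ #|F| =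
    P k * (INR 'C(m, k) * INR k ^ #|F|) / (INR 'C(m, k) * INR m ^ #|F|).
  by rewrite /Rdiv Rpow_mult_distr pow_inv; field; lra.
have -> : INR #|D| * (P k / INR 'C(m, k)) =
    P k * (INR #|D| * INR m ^ #|F|) / (INR 'C(m, k) * INR m ^ #|F|) by field; lra.
apply: Rmult_le_compat_r; first by apply/Rlt_le/Rinv_0_lt_compat; nra.
exact: Rmult_le_compat_l.
Qed.

Lemma pair_marginal (w u : 'I_m) : w != u ->
  marg P (fun T => (w \in T) && (u \in T)) <= moment 2 predT.
Proof.
move=> wu; have := superset_marginal [set w; u] predT; rewrite cards2 wu.
by apply: Rle_trans; apply: (marg_le HP) => T; rewrite subUset !sub1set andbT.
Qed.

Lemma triple_marginal (a b c : 'I_m) (r : pred nat) : a != b -> a != c -> b != c ->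
  marg P (fun T => [&& a \in T, b \in T, c \in T & r #|T|]) <= moment 3 r.
Proof.
move=> ab ac bc; have := superset_marginal [set a; b; c] r.
have -> : #|[set a; b; c]| = 3%N.
  by rewrite setUC cardsU1 cards2 ab !inE negb_or ![c == _]eq_sym ac bc.
by apply: Rle_trans; apply: (marg_le HP) => T; rewrite !subUset !sub1set -!andbA.
Qed.

End Supersets.

Ltac nonneg := repeat first [ assumption | apply: pos_INR | apply: pow_le
                            | apply: Rmult_le_pos | apply: Rplus_le_le_0_compat ].

Section Part1Estimate.
Variables (n m : nat) (P : nat -> R).
Hypothesis HP : is_prob_measure m P.
Hypothesis m_gt0 : (0 < m)%N.

Let M2 := moment m P 2 predT.
Let M2_ge0 : 0 <= M2 := moment_ge0 HP m_gt0 2 predT.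

(* Union bound over u, w1, w2, using the independence of S_u and S_v. *)
Lemma prob_doubly_linked v :
  prob P (fun S : config n m => doubly_linked S v) <=
  INR n * (INR m * (INR m * (M2 * M2))).
Proof.
apply: (prob_exists_le HP) => u.
apply: prob_guard => [|uv]; first nonneg.
apply: (prob_exists_le HP) => w1.
apply: (prob_exists_le HP) => w2.
pose pat (x : 'I_n) (T : {set 'I_m}) := (w1 \in T) && (w2 \in T).
apply: Rle_trans (prob_le HP (E' := fun S => (w1 != w2) &&
    all (fun x => pat x (S x)) [:: u; v]) _) _.
  by move=> S /and5P[-> w1u w2u w1v w2v]; rewrite /= /pat w1u w2u w1v w2v.
apply: prob_guard => [|w12]; first nonneg.
rewrite (prob_independent HP) /=; last by rewrite inE uv.
rewrite !big_cons big_nil Rmult_1_r.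
have pair_le := pair_marginal HP m_gt0 w12.
exact: (Rmult_le_compat _ _ _ _ (marg_ge0 HP _) (marg_ge0 HP _) pair_le pair_le).
Qed.

(* Union bound over u, z, w1, w2, w3, using the independence of S_v, S_u, S_z. *)
Lemma prob_rainbow_triangle v :
  prob P (fun S : config n m => rainbow_triangle S v) <=
  INR n * (INR n * (INR m * (INR m * (INR m * (M2 * (M2 * M2)))))).
Proof.
apply: (prob_exists_le HP) => u.
apply: (prob_exists_le HP) => z.
apply: prob_guard => [|uv]; first nonneg.
apply: prob_guard => [|zv]; first nonneg.
apply: prob_guard => [|uz]; first nonneg.
apply: (prob_exists_le HP) => w1.
apply: (prob_exists_le HP) => w2.
apply: (prob_exists_le HP) => w3.
pose pat (x : 'I_n) (T : {set 'I_m}) :=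
  if x == v then (w1 \in T) && (w3 \in T)
  else if x == u then (w1 \in T) && (w2 \in T) else (w2 \in T) && (w3 \in T).
have pat_v : pat v = fun T => (w1 \in T) && (w3 \in T) by rewrite /pat eqxx.
have pat_u : pat u = fun T => (w1 \in T) && (w2 \in T) by rewrite /pat (negbTE uv) eqxx.
have pat_z : pat z = fun T => (w2 \in T) && (w3 \in T).
  by rewrite /pat (negbTE zv) eq_sym (negbTE uz).
apply: Rle_trans (prob_le HP (E' := fun S => [&& w1 != w2, w2 != w3, w1 != w3 &
    all (fun x => pat x (S x)) [:: v; u; z]]) _) _.
  move=> S /and3P[-> -> /and4P[-> w1v w1u /and4P[w2u w2z w3z w3v]]] /=.
  by rewrite pat_v pat_u pat_z /= w1v w1u w2u w2z w3z w3v.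
apply: prob_guard => [|n12]; first nonneg.
apply: prob_guard => [|n23]; first nonneg.
apply: prob_guard => [|n13]; first nonneg.
rewrite (prob_independent HP) /=; last by rewrite !inE negb_or ![v == _]eq_sym uv zv uz.
rewrite !big_cons big_nil Rmult_1_r pat_v pat_u pat_z.
have g0 q := marg_ge0 HP q.
apply: Rmult_le_compat; [exact: g0 | exact: Rmult_le_pos | exact: pair_marginal | ].
exact: Rmult_le_compat (g0 _) (g0 _) (pair_marginal _ _ n12) (pair_marginal _ _ n23).
Qed.

(* Markov's inequality applied to the number of bad vertices. *)
Lemma part1_estimate K : (0 < K)%N ->
  INR K * prob P (fun S : config n m =>
            (clique_number S > omega' S + K)%N || (omega' S > clique_number S + K)%N)
  <= (INR n * INR m * M2) ^ 2 + (INR n * INR m * M2) ^ 3.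
Proof.
move=> K_gt0.
apply: Rle_trans (_ : INR K * prob P (fun S => (K <= #|bad_vertices S|)%N) <= _).
  apply/Rmult_le_compat_l/(prob_le HP) => [|S]; first exact: pos_INR.
  have := clique_number_le_bad S; have := omega'_le_clique_number S.
  by move=> h1 h2 /orP[]; lia.
apply: Rle_trans (prob_card_ge HP (@bad_vertices n m) K) _.
have -> : (INR n * INR m * M2) ^ 2 + (INR n * INR m * M2) ^ 3 =
  INR n * (INR n * (INR m * (INR m * (M2 * M2))) +
           INR n * (INR n * (INR m * (INR m * (INR m * (M2 * (M2 * M2))))))) by ring.
apply: sumR_le_ord => v.
apply: Rle_trans (prob_or HP (E1 := fun S => doubly_linked S v)
                           (E2 := fun S => rainbow_triangle S v) _) _.
  by move=> S; rewrite inE.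
exact: Rplus_le_compat (prob_doubly_linked v) (prob_rainbow_triangle v).
Qed.

End Part1Estimate.

Section Part2Estimate.
Variables (n m : nat) (P : nat -> R).
Hypothesis HP : is_prob_measure m P.
Hypothesis m_gt0 : (0 < m)%N.
Variable small : pred nat.

Let M2 := moment m P 2 predT.
Let M3 := moment m P 3 small.
Let M2_ge0 : 0 <= M2 := moment_ge0 HP m_gt0 2 predT.
Let M3_ge0 : 0 <= M3 := moment_ge0 HP m_gt0 3 small.

Lemma prob_some_large :
  prob P (fun S : config n m => ~~ [forall v, small #|S v|]) <=
  INR n * \big[Rplus/R0]_(k < m.+1 | ~~ small k) P k.
Proof.
apply: Rle_trans (prob_le HP (E' := fun S => [exists v, ~~ small #|S v|]) _) _.
  by move=> S; rewrite negb_forall.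
apply: (prob_exists_le HP) => v.
rewrite -(marg_size m P (fun k => ~~ small k)).
apply: Rle_trans (prob_le HP (E' := fun S => all (fun x => ~~ small #|S x|) [:: v]) _) _.
  by move=> S /= ->.
have -> := prob_independent HP (s := [:: v]) (fun _ T => ~~ small #|T|) isT.
by rewrite big_cons big_nil Rmult_1_r; right.
Qed.

Lemma sum_triple_marginals :
  \big[Rplus/R0]_(u1 : 'I_m) \big[Rplus/R0]_(u2 : 'I_m) \big[Rplus/R0]_(u3 : 'I_m)
    marg P (fun T => [&& u1 \in T, u2 \in T, u3 \in T & small #|T|]) = INR m ^ 3 * M3.
Proof.
pose ind (u : 'I_m) (T : {set 'I_m}) : R := if u \in T then 1 else 0.
pose g (T : {set 'I_m}) := if small #|T| then nu P T else 0.
have sum_ind T c : \big[Rplus/R0]_(u : 'I_m) (ind u T * c) = INR #|T| * c.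
  rewrite (eq_bigr (fun u => if u \in T then c else 0)); last first.
    by move=> u _; rewrite /ind; case: (u \in T); lra.
  by rewrite -big_mkcond sumR_const.
have split u1 u2 u3 : marg P (fun T => [&& u1 \in T, u2 \in T, u3 \in T & small #|T|]) =
   \big[Rplus/R0]_(T : {set 'I_m}) (ind u1 T * (ind u2 T * (ind u3 T * g T))).
  rewrite /marg big_mkcond; apply: eq_bigr => T _; rewrite /ind /g.
  by case: (u1 \in T); case: (u2 \in T); case: (u3 \in T); case: (small #|T|) => /=; lra.
under eq_bigr => u1 _ do under eq_bigr => u2 _ do under eq_bigr => u3 _ do rewrite split.
under eq_bigr => u1 _ do under eq_bigr => u2 _ do rewrite exchange_big.
under eq_bigr => u1 _ do rewrite exchange_big.
rewrite exchange_big /=.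
rewrite (eq_bigr (fun T => nu P T * (if small #|T| then INR #|T| ^ 3 else 0))); last first.
  move=> T _.
  under eq_bigr => u1 _ do under eq_bigr => u2 _ do rewrite -!big_distrr /= sum_ind.
  under eq_bigr => u1 _ do rewrite -big_distrr /= sum_ind.
  by rewrite sum_ind /g; case: (small #|T|) => /=; lra.
rewrite (sum_by_size m P (fun k => if small k then INR k ^ 3 else 0)) /M3 /moment big_distrr.
have mR : 0 < INR m by apply/lt_0_INR/ltP.
by apply: eq_bigr => k _; case: (small k) => /=; [field; lra | lra].
Qed.

Definition external_witness (S : config n m) (w : 'I_m) (z a1 a2 a3 : 'I_n) (u1 u2 u3 : 'I_m) 
    : bool :=
  [&& [&& a1 != a2, a1 != a3, a2 != a3, z != a1, z != a2 & z != a3],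
      [&& u1 != w, u2 != w & u3 != w],
      [&& w \in S a1, w \in S a2 & w \in S a3],
      [&& u1 \in S a1, u2 \in S a2 & u3 \in S a3] &
      [&& u1 \in S z, u2 \in S z, u3 \in S z & small #|S z|]].

(* Union bound over w, z, a1, a2, a3 (and a sum over u1, u2, u3), using the
   independence of S_z, S_a1, S_a2, S_a3. *)
Lemma prob_external_triple :
  prob P (fun S : config n m => external_triple S && [forall v, small #|S v|]) <=
  INR m * (INR n * (INR n * (INR n * (INR n * (M2 * (M2 * M2) * (INR m ^ 3 * M3)))))).
Proof.
apply: Rle_trans (prob_le HP (E' := fun S =>
  [exists w, [exists z, [exists a1, [exists a2, [exists a3,
  [exists u1, [exists u2, [exists u3, external_witness S w z a1 a2 a3 u1 u2 u3]]]]]]]]) _) _.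
  move=> S /andP[/existsP[w /existsP[z /existsP[a1 /existsP[a2 /existsP[a3
     /existsP[u1 /existsP[u2 /existsP[u3 /and5P[hd huw hw hu /and3P[hz1 hz2 hz3]]]]]]]]]]
     /forallP hsmall].
  apply/existsP; exists w; apply/existsP; exists z; apply/existsP; exists a1.
  apply/existsP; exists a2; apply/existsP; exists a3; apply/existsP; exists u1.
  apply/existsP; exists u2; apply/existsP; exists u3.
  by rewrite /external_witness hd huw hw hu hz1 hz2 hz3 hsmall.
apply: (prob_exists_le HP) => w.
apply: (prob_exists_le HP) => z.
apply: (prob_exists_le HP) => a1.
apply: (prob_exists_le HP) => a2.
apply: (prob_exists_le HP) => a3.
rewrite -sum_triple_marginals.
apply: Rle_trans (prob_exists HP _) _; rewrite big_distrr; apply: sumR_le => u1 _.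
apply: Rle_trans (prob_exists HP _) _; rewrite big_distrr; apply: sumR_le => u2 _.
apply: Rle_trans (prob_exists HP _) _; rewrite big_distrr; apply: sumR_le => u3 _.
have zp0 := marg_ge0 HP (fun T => [&& u1 \in T, u2 \in T, u3 \in T & small #|T|]).
apply: prob_guard => [|/and5P[d12 d13 d23 dz1 /andP[dz2 dz3]]]; first nonneg.
apply: prob_guard => [|/and3P[uw1 uw2 uw3]]; first nonneg.
apply: Rle_trans (prob_four_le HP (x1 := z) (x2 := a1) (x3 := a2) (x4 := a3)
   (q1 := fun T => [&& u1 \in T, u2 \in T, u3 \in T & small #|T|])
   (q2 := fun T => (w \in T) && (u1 \in T)) (q3 := fun T => (w \in T) && (u2 \in T))
   (q4 := fun T => (w \in T) && (u3 \in T)) _ _) _.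
- by rewrite /= !inE !negb_or dz1 dz2 dz3 d12 d13 d23.
- move=> S /and3P[/and3P[wa1 wa2 wa3] /and3P[u1a u2a u3a] /and4P[u1z u2z u3z sz]].
  by rewrite u1z u2z u3z sz wa1 wa2 wa3 u1a u2a u3a.
have pm u : u != w -> marg P (fun T => (w \in T) && (u \in T)) <= M2.
  by move=> uw; apply: pair_marginal => //; rewrite eq_sym.
have q0 u := marg_ge0 HP (fun T => (w \in T) && (u \in T)).
rewrite [X in _ <= X]Rmult_comm; apply: Rmult_le_compat_l zp0 _.
apply: Rmult_le_compat (pm _ uw1) _; [exact: q0 | nonneg; exact: q0 |].
exact: Rmult_le_compat (q0 _) (q0 _) (pm _ uw2) (pm _ uw3).
Qed.

Definition K4_witness (S : config n m) (v1 v2 v3 v4 : 'I_n) (w12 w13 w14 w23 w24 w34 : 'I_m)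
    : bool :=
  [&& [&& v1 != v2, v1 != v3, v1 != v4, v2 != v3, v2 != v4 & v3 != v4],
      [&& [&& w12 != w13, w12 != w14 & w13 != w14],
          [&& w12 != w23, w12 != w24 & w23 != w24],
          [&& w13 != w23, w13 != w34 & w23 != w34] &
          [&& w14 != w24, w14 != w34 & w24 != w34]],
      [&& w12 \in S v1, w13 \in S v1, w14 \in S v1 & small #|S v1|],
      [&& w12 \in S v2, w23 \in S v2, w24 \in S v2 & small #|S v2|],
      [&& w13 \in S v3, w23 \in S v3, w34 \in S v3 & small #|S v3|] &
      [&& w14 \in S v4, w24 \in S v4, w34 \in S v4 & small #|S v4|]].

(* Union bound over the four vertices and six attributes, using the independence
   of the four attribute sets. *)
Lemma prob_rainbow_K4 :
  prob P (fun S : config n m => rainbow_K4 S && [forall v, small #|S v|]) <=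
  INR n * (INR n * (INR n * (INR n * (INR m * (INR m * (INR m * (INR m * (INR m *
    (INR m * (M3 * (M3 * (M3 * M3)))))))))))).
Proof.
apply: Rle_trans (prob_le HP (E' := fun S =>
  [exists v1, [exists v2, [exists v3, [exists v4,
  [exists w12, [exists w13, [exists w14, [exists w23, [exists w24, [exists w34,
    K4_witness S v1 v2 v3 v4 w12 w13 w14 w23 w24 w34]]]]]]]]]]) _) _.
  move=> S /andP[/existsP[v1 /existsP[v2 /existsP[v3 /existsP[v4 /existsP[w12
    /existsP[w13 /existsP[w14 /existsP[w23 /existsP[w24 /existsP[w34
    /and5P[hv h1 h2 h3 /and5P[h4 a1 a2 a3 a4]]]]]]]]]]]] /forallP hsmall].
  apply/existsP; exists v1; apply/existsP; exists v2; apply/existsP; exists v3.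
  apply/existsP; exists v4; apply/existsP; exists w12; apply/existsP; exists w13.
  apply/existsP; exists w14; apply/existsP; exists w23; apply/existsP; exists w24.
  apply/existsP; exists w34.
  rewrite /K4_witness hv h1 h2 h3 h4 !hsmall.
  by move: a1 a2 a3 a4 => /and3P[-> -> ->] /and3P[-> -> ->] /and3P[-> -> ->] /and3P[-> -> ->].
apply: (prob_exists_le HP) => v1.
apply: (prob_exists_le HP) => v2.
apply: (prob_exists_le HP) => v3.
apply: (prob_exists_le HP) => v4.
apply: (prob_exists_le HP) => w12.
apply: (prob_exists_le HP) => w13.
apply: (prob_exists_le HP) => w14.
apply: (prob_exists_le HP) => w23.
apply: (prob_exists_le HP) => w24.
apply: (prob_exists_le HP) => w34.
apply: prob_guard => [|/and5P[d12 d13 d14 d23 /andP[d24 d34]]]; first nonneg.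
apply: prob_guard => [|]; first nonneg.
case/and4P=> /and3P[a1 a2 a3] /and3P[a4 a5 a6] /and3P[a7 a8 a9] /and3P[a10 a11 a12].
pose q (a b c : 'I_m) (T : {set 'I_m}) := [&& a \in T, b \in T, c \in T & small #|T|].
apply: Rle_trans (prob_four_le HP (x1 := v1) (x2 := v2) (x3 := v3) (x4 := v4)
   (q1 := q w12 w13 w14) (q2 := q w12 w23 w24) (q3 := q w13 w23 w34)
   (q4 := q w14 w24 w34) _ _) _.
- by rewrite /= !inE !negb_or d12 d13 d14 d23 d24 d34.
- by move=> S /and4P[h1 h2 h3 h4]; rewrite /q h1 h2 h3 h4.
have q0 a b c := marg_ge0 HP (q a b c).
have M3q a b c : a != b -> a != c -> b != c -> marg P (q a b c) <= M3.
  exact: triple_marginal.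
apply: Rmult_le_compat (M3q _ _ _ a1 a2 a3) _; [exact: q0 | nonneg; exact: q0 |].
apply: Rmult_le_compat (M3q _ _ _ a4 a5 a6) _; [exact: q0 | nonneg; exact: q0 |].
exact: Rmult_le_compat (q0 _ _ _) (q0 _ _ _) (M3q _ _ _ a7 a8 a9) (M3q _ _ _ a10 a11 a12).
Qed.

End Part2Estimate.

Section Part2Bound.
Variables (n m : nat) (P : nat -> R).
Hypothesis HP : is_prob_measure m P.
Hypothesis m_gt0 : (0 < m)%N.
Hypothesis n_gt0 : (0 < n)%N.
Variable e : R.
Hypothesis e_gt0 : 0 < e.

Let M2 := moment m P 2 predT.
Let A := INR n * INR m * M2.
Let A_ge0 : 0 <= A := ltac:(rewrite /A; have := moment_ge0 HP m_gt0 2 predT; nonneg).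

(* The factor gained on each additional attribute: b / m with b = e m^(1/2). *)
Let c := e * sqrt (INR m) / INR m.

Lemma ratio_bounds : 0 <= c <= e /\ c ^ 4 * INR m ^ 2 = e ^ 4.
Proof.
have mR : 1 <= INR m by apply: (le_INR 1); apply/leP.
have ss : sqrt (INR m) * sqrt (INR m) = INR m by apply: sqrt_sqrt; lra.
have s1 : 1 <= sqrt (INR m) by rewrite -sqrt_1; apply: sqrt_le_1_alt.
have sm : sqrt (INR m) <= INR m by nra.
have cm : c * INR m = e * sqrt (INR m) by rewrite /c; field; lra.
split; first split.
- by apply: (Rmult_le_reg_r (INR m)); [lra | rewrite cm Rmult_0_l; nra].
- by apply: (Rmult_le_reg_r (INR m)); [lra | rewrite cm; nra].
- have s4 : sqrt (INR m) ^ 4 = INR m ^ 2.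
    by transitivity ((sqrt (INR m) * sqrt (INR m)) ^ 2); [ring | rewrite ss].
  by rewrite /c /Rdiv !Rpow_mult_distr pow_inv s4; field; lra.
Qed.

Definition small_size (k : nat) : bool := ~~ Rltb (e * sqrt (INR n)) (Yscale n m * INR k).

Lemma small_size_le k : small_size k -> INR k <= e * sqrt (INR m).
Proof.
rewrite /small_size /Rltb; case: Rlt_dec => // /Rnot_lt_le hk _.
have nR : 0 < INR n by apply/lt_0_INR/ltP.
have mR : 0 < INR m by apply/lt_0_INR/ltP.
have sn : 0 < sqrt (INR n) by apply: sqrt_lt_R0.
have sm : 0 < sqrt (INR m) by apply: sqrt_lt_R0.
move: hk; rewrite /Yscale sqrt_div_alt // => hk.
apply: (Rmult_le_reg_l (sqrt (INR n) / sqrt (INR m))); first exact: Rdiv_lt_0_compat.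
have -> : sqrt (INR n) / sqrt (INR m) * (e * sqrt (INR m)) = e * sqrt (INR n) by field; lra.
lra.
Qed.

Let M3 := moment m P 3 small_size.
Let M3_ge0 : 0 <= M3 := moment_ge0 HP m_gt0 3 small_size.

Lemma M3_le : M3 <= c * M2.
Proof.
apply: (moment_succ_le HP m_gt0) => [|k]; last exact: small_size_le.
by apply: Rmult_le_pos; [lra | apply: sqrt_pos].
Qed.

Lemma external_triple_term_le :
  INR m * (INR n * (INR n * (INR n * (INR n * (M2 * (M2 * M2) * (INR m ^ 3 * M3)))))) <=
  e * A ^ 4.
Proof.
have [[c0 c_le] _] := ratio_bounds.
have -> : INR m * (INR n * (INR n * (INR n * (INR n * (M2 * (M2 * M2) * (INR m ^ 3 * M3)))))) =
          A ^ 3 * (INR n * INR m * M3) by rewrite /A; ring.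
have -> : e * A ^ 4 = A ^ 3 * (INR n * INR m * (e * M2)) by rewrite /A; ring.
apply: Rmult_le_compat_l; first by nonneg.
apply: Rmult_le_compat_l; first by nonneg.
apply: Rle_trans M3_le _; apply: Rmult_le_compat_r c_le.
exact: moment_ge0.
Qed.

Lemma rainbow_K4_term_le :
  INR n * (INR n * (INR n * (INR n * (INR m * (INR m * (INR m * (INR m * (INR m *
    (INR m * (M3 * (M3 * (M3 * M3)))))))))))) <= e ^ 4 * A ^ 4.
Proof.
have [[c0 _] c4] := ratio_bounds.
have -> : e ^ 4 * A ^ 4 = (INR n * INR m) ^ 4 * INR m ^ 2 * (c * M2) ^ 4.
  by rewrite -c4 /A; ring.
have -> : INR n * (INR n * (INR n * (INR n * (INR m * (INR m * (INR m * (INR m *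
    (INR m * (INR m * (M3 * (M3 * (M3 * M3)))))))))))) =
    (INR n * INR m) ^ 4 * INR m ^ 2 * M3 ^ 4 by ring.
apply: Rmult_le_compat_l; first by nonneg.
by apply: pow_incr; split; [exact: M3_ge0 | exact: M3_le].
Qed.

(* Either some set is large, or one of the two rigid patterns occurs. *)
Lemma part2_estimate :
  prob P (fun S : config n m => ~~ (clique_number S <= maxn 3 (omega' S + 3))%N) <=
  INR n * probY_gt n m P (e * sqrt (INR n)) + (e + e ^ 4) * A ^ 4.
Proof.
set all_small := fun S : config n m => [forall v, small_size #|S v|].
apply: Rle_trans (prob_or HP (E1 := fun S => ~~ all_small S)
   (E2 := fun S => (external_triple S && all_small S) || (rainbow_K4 S && all_small S)) _) _.
  move=> S; apply: contraR; rewrite negb_or negbK => /andP[small_S].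
  rewrite negb_or small_S !andbT => /andP[no_ext no_K4].
  apply: leq_trans (clique_number_le_rigid no_ext no_K4) _.
  by rewrite geq_max leq_maxl leq_max leq_addr orbT.
apply: Rplus_le_compat.
  apply: Rle_trans (prob_some_large n HP small_size) _; right; congr (_ * _).
  by apply: eq_bigl => k; rewrite /small_size negbK.
apply: Rle_trans (prob_or HP (E1 := fun S => external_triple S && all_small S)
   (E2 := fun S => rainbow_K4 S && all_small S) (fun S h => h)) _.
rewrite Rmult_plus_distr_r; apply: Rplus_le_compat.
  exact: Rle_trans (prob_external_triple n HP m_gt0 small_size) external_triple_term_le.
exact: Rle_trans (prob_rainbow_K4 n HP m_gt0 small_size) rainbow_K4_term_le.
Qed.

End Part2Bound.

Lemma EY2_moment n m P : (0 < m)%N -> EY2 n m P = INR n * INR m * moment m P 2 predT.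
Proof.
move=> m_gt0; have mR : 0 < INR m by apply/lt_0_INR/ltP.
rewrite /EY2 /Yscale pow2_sqrt; last first.
  by apply: Rmult_le_pos; [apply: pos_INR | apply/Rlt_le/Rinv_0_lt_compat].
rewrite /moment !big_distrr /=; apply: eq_bigr => k _; rewrite /Rdiv; field; lra.
Qed.

Lemma second_moment_bounded m P :
  ri_sequence m P -> condA m P -> eventually_bounded (fun n => VarY n (m n) (P n)) ->
  exists A0 N, forall n, (N <= n)%N ->
    (0 < m n)%N /\ INR n * INR (m n) * moment (m n) (P n) 2 predT <= A0.
Proof.
move=> [m_inf _] [B1 [N1 hB1]] [B2 [N2 hB2]].
have [N0 hN0] := m_inf 1%N.
exists (B2 + B1 ^ 2), (maxn N0 (maxn N1 N2)) => n hn.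
have m_gt0 : (0 < m n)%N by apply: hN0; lia.
split => //; rewrite -EY2_moment //.
have -> : EY2 n (m n) (P n) = VarY n (m n) (P n) + EY n (m n) (P n) ^ 2.
  by rewrite /VarY; ring.
apply: Rplus_le_compat; first exact: Rle_trans (Rle_abs _) (hB2 n ltac:(lia)).
rewrite -pow2_abs; apply: pow_incr; split; [exact: Rabs_pos | exact: (hB1 n ltac:(lia))].
Qed.

Lemma part1_asymptotic (m : nat -> nat) (P : nat -> nat -> R) :
  ri_sequence m P -> condA m P -> eventually_bounded (fun n => VarY n (m n) (P n)) ->
  forall eps : R, 0 < eps ->
    exists K N : nat, forall n : nat, (N <= n)%N ->
      prob (P n) (fun S : config n (m n) =>
        (clique_number S > omega' S + K)%N || (omega' S > clique_number S + K)%N) <= eps.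
Proof.
move=> hseq hA hV eps eps_gt0.
have [A0 [N hA0]] := second_moment_bounded hseq hA hV.
have [K hK] := INR_archimed eps (A0 ^ 2 + A0 ^ 3) eps_gt0.
exists K.+1, N => n /hA0[m_gt0 hAn].
have HP := proj2 hseq n.
have M2_ge0 := moment_ge0 HP m_gt0 2 predT.
have K1 : 0 < INR K.+1 by apply/lt_0_INR/ltP.
have K_lt : INR K < INR K.+1 by apply/lt_INR/ltP.
have := part1_estimate n HP m_gt0 (ltn0Sn K).
set A := INR n * INR (m n) * _ => bound.
have A_ge0 : 0 <= A by rewrite /A; nonneg.
have A_le : A ^ 2 + A ^ 3 <= A0 ^ 2 + A0 ^ 3.
  by apply: Rplus_le_compat; apply: pow_incr.
apply: (Rmult_le_reg_l (INR K.+1)) => //; nra.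
Qed.

(* The choice of the threshold d for eps_n: if 0 < x <= d and 0 <= A <= A0, the
   contribution (x + x^4) A^4 of the rigid patterns stays below e/2. *)
Lemma pattern_term_small (A A0 e x : R) : 0 < e -> 0 <= A <= A0 -> 0 < x ->
  x <= Rmin 1 (e / (4 * (A0 ^ 4 + 1))) -> (x + x ^ 4) * A ^ 4 < e / 2.
Proof.
move=> e_gt0 [A_ge0 A_le] x_gt0 hx.
have x_le1 : x <= 1 := Rle_trans _ _ _ hx (Rmin_l _ _).
have A0_4 : 0 <= A0 ^ 4 by apply/pow_le/(Rle_trans _ _ _ A_ge0).
have q_gt0 : 0 < 4 * (A0 ^ 4 + 1) by lra.
have x_le : x * (4 * (A0 ^ 4 + 1)) <= e.
  have := Rmult_le_compat_r _ _ _ (Rlt_le _ _ q_gt0) (Rle_trans _ _ _ hx (Rmin_r _ _)).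
  by rewrite /Rdiv Rmult_assoc Rinv_l ?Rmult_1_r //; apply: Rgt_not_eq.
have x4 : x ^ 4 <= x.
  have x3 : x ^ 3 <= 1 by rewrite -(pow1 3); apply: pow_incr; lra.
  have -> : x ^ 4 = x * x ^ 3 by ring.
  nra.
have A4 : A ^ 4 <= A0 ^ 4 by apply: pow_incr.
have A4_ge0 : 0 <= A ^ 4 by apply: pow_le.
nra.
Qed.

Lemma part2_asymptotic (m : nat -> nat) (P : nat -> nat -> R) (epsn : nat -> R) :
  ri_sequence m P -> condA m P -> eventually_bounded (fun n => VarY n (m n) (P n)) ->
  (forall n, 0 < epsn n) -> tends_to epsn R0 ->
  tends_to (fun n => INR n * probY_gt n (m n) (P n) (epsn n * sqrt (INR n))) R0 ->
  tends_to (fun n => prob (P n) (fun S : config n (m n) =>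
              (clique_number S <= maxn 3 (omega' S + 3))%N)) R1.
Proof.
move=> hseq hA hV eps_gt0 eps_to0 tail_to0 e e_gt0.
have [A0 [N0 hA0]] := second_moment_bounded hseq hA hV.
(* eps_n <= d and n P(Y > eps_n n^(1/2)) < e/2 eventually *)
pose d := Rmin 1 (e / (4 * (A0 ^ 4 + 1))).
have A0_4 : 0 <= A0 ^ 4 by rewrite -[4%N]/(2 * 2)%N pow_mult; apply: pow2_ge_0.
have d_gt0 : 0 < d by apply: Rmin_pos; [lra | apply: Rdiv_lt_0_compat; lra].
have [N1 hN1] := eps_to0 d d_gt0.
have [N2 hN2] := tail_to0 (e / 2) ltac:(lra).
exists (maxn (maxn N0 N1) (maxn N2 1)) => n hn.
have [m_gt0 hAn] := hA0 n ltac:(lia).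
have HP := proj2 hseq n.
have n_gt0 : (0 < n)%N by lia.
have bound := part2_estimate HP m_gt0 n_gt0 (eps_gt0 n).
have compl := prob_compl HP (fun S : config n (m n) =>
                 (clique_number S <= maxn 3 (omega' S + 3))%N).
have p0 := prob_ge0 HP (fun S : config n (m n) => ~~ (clique_number S <= maxn 3 (omega' S + 3))%N).
have A_ge0 : 0 <= INR n * INR (m n) * moment (m n) (P n) 2 predT.
  by have := moment_ge0 HP m_gt0 2 predT; nonneg.
have eps_le : epsn n <= d.
  by have := hN1 n ltac:(lia); rewrite Rminus_0_r Rabs_pos_eq; [lra | apply/Rlt_le/eps_gt0].
(* P(bad) <= n P(Y > eps_n n^(1/2)) + (eps_n + eps_n^4) A^4 < e/2 + e/2 *)
have pattern := pattern_term_small e_gt0 (conj A_ge0 hAn) (eps_gt0 n) eps_le.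
have tail := Rle_abs (INR n * probY_gt n (m n) (P n) (epsn n * sqrt (INR n))).
have := hN2 n ltac:(lia); rewrite Rminus_0_r => tail_small.
change (Rabs (prob (P n) (fun S : config n (m n) =>
   (clique_number S <= maxn 3 (omega' S + 3))%N) - 1) < e).
rewrite Rabs_left1; lra.
Qed.


Theorem theorem2 :
  (* Part 1: omega(G(n)) = omega'(G(n)) + O_P(1). *)
  (forall (m : nat -> nat) (P : nat -> nat -> R),
     ri_sequence m P ->
     condA m P ->
     eventually_bounded (fun n => VarY n (m n) (P n)) ->
     forall eps : R, (0 < eps) ->
       exists (K N : nat), forall n : nat, (N <= n)%N ->
         (prob (P n) (fun S : config n (m n) =>
            (clique_number S > omega' S + K)%N
            || (omega' S > clique_number S + K)%N) <= eps))
  /\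
  (* Part 2: an absolute constant C, valid for every such sequence. *)
  (exists C : nat,
     forall (m : nat -> nat) (P : nat -> nat -> R) (epsn : nat -> R),
       ri_sequence m P ->
       condA m P ->
       eventually_bounded (fun n => VarY n (m n) (P n)) ->
       (forall n, (0 < epsn n)) ->
       tends_to epsn R0 ->
       tends_to (fun n => INR n * probY_gt n (m n) (P n) (epsn n * sqrt (INR n)))
                R0 ->
       tends_to (fun n => prob (P n) (fun S : config n (m n) =>
                   (clique_number S <= maxn C (omega' S + 3))%N)) R1).
Proof.
split; first exact: part1_asymptotic.
by exists 3%N; apply: part2_asymptotic.
Qed.
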